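(* Let $\Lambda\neq 0$, $\kappa=8\pi G/c^4$, let $F$ be any continuous real function with $F(4\Lambda)=0$, let $c'\in\mathbb{R}$ be arbitrary, and let $$f(R)=\exp\Big(\frac{R}{2\Lambda}\Big)\Big[\int F(R)\exp\Big(-\frac{R}{2\Lambda}\Big)dR+c'\Big].$$ Then every vacuum solution of Einstein's field equations $R_{\mu\nu}-\tfrac12 Rg_{\mu\nu}+\Lambda g_{\mu\nu}=0$ is a vacuum solution of the $f(R)$ field equations $f'(R)R_{\mu\nu}-\tfrac12 f(R)g_{\mu\nu}-\nabla_\mu\nabla_\nu f'(R)+\square f'(R)g_{\mu\nu}=0$.
   Context: Metrics $g_{\mu\nu}$ are on a four-dimensional spacetime; $R_{\mu\nu}$ is the Ricci tensor, $R=g^{\mu\nu}R_{\mu\nu}$ the Ricci scalar, $\nabla$ the Levi-Civita connection and $\square=g^{\mu\nu}\nabla_\mu\nabla_\nu$. $\int F(R)\exp(-R/(2\Lambda))\,dR$ denotes a fixed antiderivative in $R$. A vacuum solution is one with vanishing stress-energy tensor. *)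

(* R : realType, points of a coordinate chart are 'rV[R]_4. *)
From HB Require Import structures.
From mathcomp Require Import all_boot all_order all_algebra.
From mathcomp Require Import all_classical all_reals all_analysis.
Set Implicit Arguments. Unset Strict Implicit. Unset Printing Implicit Defensive.
Import Order.TTheory GRing.Theory Num.Theory.
Import numFieldNormedType.Exports.
Local Open Scope classical_set_scope.
Local Open Scope ring_scope.

Definition pd {R : realType} (i : 'I_4) (h : 'rV[R]_4 -> R) (x : 'rV[R]_4) : R :=
  'D_(delta_mx 0 i) h x.

Definition ginv {R : realType} (g : 'rV[R]_4 -> 'M[R]_4) (x : 'rV[R]_4) : 'M[R]_4 :=
  invmx (g x).

Definition christoffel {R : realType} (g : 'rV[R]_4 -> 'M[R]_4) (l m n : 'I_4)
  (x : 'rV[R]_4) : R :=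
  2^-1 * \sum_(s < 4) ginv g x l s *
    (pd m (fun y => g y s n) x + pd n (fun y => g y s m) x - pd s (fun y => g y m n) x).

Definition ricci {R : realType} (g : 'rV[R]_4 -> 'M[R]_4) (m n : 'I_4) (x : 'rV[R]_4) : R :=
  \sum_(l < 4) (pd l (christoffel g l m n) x - pd n (christoffel g l m l) x
    + \sum_(s < 4) (christoffel g l l s x * christoffel g s m n x
                    - christoffel g l n s x * christoffel g s m l x)).

Definition ricci_scalar {R : realType} (g : 'rV[R]_4 -> 'M[R]_4) (x : 'rV[R]_4) : R :=
  \sum_(m < 4) \sum_(n < 4) ginv g x m n * ricci g m n x.

Definition cov_hess {R : realType} (g : 'rV[R]_4 -> 'M[R]_4) (phi : 'rV[R]_4 -> R)
  (m n : 'I_4) (x : 'rV[R]_4) : R :=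
  pd m (pd n phi) x - \sum_(l < 4) christoffel g l m n x * pd l phi x.

Definition box {R : realType} (g : 'rV[R]_4 -> 'M[R]_4) (phi : 'rV[R]_4 -> R)
  (x : 'rV[R]_4) : R :=
  \sum_(m < 4) \sum_(n < 4) ginv g x m n * cov_hess g phi m n x.

Definition eta {R : realType} : 'M[R]_4 :=
  diag_mx (\row_(i < 4) (if i == 0 then -1 else 1)).

Definition spacetime_metric {R : realType} (U : set 'rV[R]_4)
  (g : 'rV[R]_4 -> 'M[R]_4) : Prop :=
  open U /\
  forall x, U x ->
    (g x)^T = g x /\
    g x \in unitmx /\
    (exists P : 'M[R]_4, P \in unitmx /\ P^T *m g x *m P = eta) /\
    (forall i j : 'I_4, differentiable (fun y => g y i j) x /\
       forall k : 'I_4, differentiable (pd k (fun y => g y i j)) x).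

Definition einstein_vacuum {R : realType} (Lam : R) (U : set 'rV[R]_4)
  (g : 'rV[R]_4 -> 'M[R]_4) : Prop :=
  forall x, U x -> forall m n : 'I_4,
    ricci g m n x - 2^-1 * ricci_scalar g x * g x m n + Lam * g x m n = 0.

Definition fR_vacuum {R : realType} (f : R -> R) (U : set 'rV[R]_4)
  (g : 'rV[R]_4 -> 'M[R]_4) : Prop :=
  let phi := fun y => (derive1 f) (ricci_scalar g y) in
  forall x, U x -> forall m n : 'I_4,
    (derive1 f) (ricci_scalar g x) * ricci g m n x - 2^-1 * f (ricci_scalar g x) * g x m n
    - cov_hess g phi m n x + box g phi x * g x m n = 0.

From HB Require Import structures.
From mathcomp Require Import all_boot all_order all_algebra.
From mathcomp Require Import all_classical all_reals all_analysis.
From mathcomp Require Import ring lra.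
Import Order.TTheory GRing.Theory Num.Theory.
Import numFieldNormedType.Exports.
Local Open Scope classical_set_scope.
Local Open Scope ring_scope.

(* Tracing the vacuum Einstein equations with g^{mu nu} forces R = 4 Lam, so on
   the coordinate domain the scalar field f'(R) is constant and all its
   covariant derivatives vanish.  The f(R) equations then reduce to
   (f'(4 Lam) (R/2 - Lam) - f(4 Lam)/2) g_{mu nu} = 0, i.e. to
   2 Lam f'(4 Lam) = f(4 Lam).  The given f solves the ODE
   f' = f/(2 Lam) + F, so this condition is exactly F(4 Lam) = 0. *)

Lemma is_derive_expR_div {R : realType} (a r : R) :
  is_derive r 1 (fun x : R => expR (x / a)) (expR (r / a) * a^-1).
Proof.
have div_a : is_derive r 1 (fun x : R => x / a) a^-1.
  by apply: is_derive_eq; rewrite /GRing.scale /=; ring.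
exact: (is_derive1_comp (f := expR)).
Qed.

Lemma derive1_expR_div_antiderivative {R : realType} (a c : R) (F A : R -> R) (r : R) :
  (forall s : R, is_derive s 1 A (F s * expR (- (s / a)))) ->
  derive1 (fun x => expR (x / a) * (A x + c)) r
  = a^-1 * (expR (r / a) * (A r + c)) + F r.
Proof.
move=> A'.
have Ac' : is_derive r 1 (fun x => A x + c) (F r * expR (- (r / a))).
  by apply: is_derive_eq; rewrite addr0.
rewrite derive1E (@derive_val _ _ _ _ _ _ _ (is_deriveM (is_derive_expR_div a r) Ac')) /=.
rewrite /GRing.scale /= expRN mulrCA mulfV ?expR_eq0 // mulr1.
by rewrite addrC mulrC mulrAC mulrC.
Qed.

Lemma sum_invmx_mul_symmetric {R : fieldType} {n : nat} (G : 'M[R]_n) :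
  G^T = G -> G \in unitmx ->
  \sum_(i < n) \sum_(j < n) invmx G i j * G i j = n%:R.
Proof.
move=> GT Gu.
rewrite -[RHS](mxtrace1 R n) -(mulVmx Gu) /mxtrace.
apply: eq_bigr => i _; rewrite mxE; apply: eq_bigr => j _.
by congr (_ * _); rewrite -[in LHS]GT mxE.
Qed.

Section EinsteinVacuum.
Context {R : realType} {Lam : R} {U : set 'rV[R]_4} {g : 'rV[R]_4 -> 'M[R]_4}.
Hypothesis vacuum : einstein_vacuum Lam U g.

Lemma einstein_vacuum_ricci x m n : U x ->
  ricci g m n x = (2^-1 * ricci_scalar g x - Lam) * g x m n.
Proof. by move=> Ux; apply/eqP; rewrite -subr_eq0 -(vacuum x Ux m n); apply/eqP; ring. Qed.

Lemma einstein_vacuum_ricci_scalar x : U x ->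
  (g x)^T = g x -> g x \in unitmx -> ricci_scalar g x = 4 * Lam.
Proof.
move=> Ux gT gu.
have trace : ricci_scalar g x = (2^-1 * ricci_scalar g x - Lam) * 4.
  rewrite -(sum_invmx_mul_symmetric _ gT gu) big_distrr.
  apply: eq_bigr => m _; rewrite big_distrr; apply: eq_bigr => n _.
  by rewrite einstein_vacuum_ricci // /ginv mulrCA.
lra.
Qed.

End EinsteinVacuum.

Section ConstantScalarField.
Context {R : realType} {U : set 'rV[R]_4} {phi : 'rV[R]_4 -> R} {c : R}.
Hypotheses (U_open : open U) (phi_const : forall y, U y -> phi y = c).

Lemma pd_eq0_on_open {h : 'rV[R]_4 -> R} {k : R} :
  (forall y, U y -> h y = k) -> forall i x, U x -> pd i h x = 0.
Proof.
move=> hk i x Ux; rewrite /pd (@near_eq_derive _ _ _ _ (cst k)) ?derive_cst //.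
by apply: filterS (U_open x Ux) => y Uy; exact: hk.
Qed.

Lemma cov_hess_const g m n x : U x -> cov_hess g phi m n x = 0.
Proof.
move=> Ux.
have pd_phi l y : U y -> pd l phi y = 0 by exact: (pd_eq0_on_open phi_const l y).
rewrite /cov_hess (pd_eq0_on_open (pd_phi n)) // big1 ?subr0 // => l _.
by rewrite pd_phi ?mulr0.
Qed.

Lemma box_const g x : U x -> box g phi x = 0.
Proof.
move=> Ux; rewrite /box big1 // => m _; rewrite big1 // => n _.
by rewrite cov_hess_const ?mulr0.
Qed.

End ConstantScalarField.

Lemma einstein_vacuum_fR_vacuum (R : realType) (Lam : R) (f : R -> R)
    (U : set 'rV[R]_4) (g : 'rV[R]_4 -> 'M[R]_4) :
  2 * Lam * derive1 f (4 * Lam) = f (4 * Lam) ->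
  spacetime_metric U g -> einstein_vacuum Lam U g -> fR_vacuum f U g.
Proof.
move=> f_cond [U_open metric] vacuum phi x Ux m n.
have scalar y : U y -> ricci_scalar g y = 4 * Lam.
  by move=> Uy; have [gT [gu _]] := metric y Uy;
    exact: einstein_vacuum_ricci_scalar vacuum y Uy gT gu.
have phi_const y : U y -> derive1 f (ricci_scalar g y) = derive1 f (4 * Lam).
  by move=> Uy; rewrite scalar.
rewrite (cov_hess_const U_open phi_const) // (box_const U_open phi_const) //.
rewrite (einstein_vacuum_ricci vacuum) // scalar // -f_cond mul0r subr0 addr0.
by move: (derive1 f _) (g x m n) => d G; field; lra.
Qed.

Theorem mainTheorem6 (R : realType) (Lam : R) (F A : R -> R) (c' : R)
  (U : set 'rV[R]_4) (g : 'rV[R]_4 -> 'M[R]_4) :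
  Lam != 0 ->
  continuous F ->
  F (4 * Lam) = 0 ->
  (forall r : R, is_derive r 1 A (F r * expR (- (r / (2 * Lam))))) ->
  spacetime_metric U g ->
  einstein_vacuum Lam U g ->
  fR_vacuum (fun r : R => expR (r / (2 * Lam)) * (A r + c')) U g.
Proof.
(* Continuity of F only serves to guarantee the antiderivative A, which is given. *)
move=> Lam0 _ F0 A'; apply: einstein_vacuum_fR_vacuum => //.
rewrite derive1_expR_div_antiderivative // F0 addr0 mulrA mulfV ?mul1r //.
by rewrite mulf_neq0 ?pnatr_eq0.
Qed.
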